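(* (A weighted, repeated argument, double, less-than sum simplification.) For complex variables $x_0,\dots,x_q$, $q\ge0$, and $\tau\in\mathbb{R}$, $$\sum_{\substack{i,j=0\\ i\le j}}^{q}x_i\,e^{-\tau[x_0,\ldots,x_q,x_i,x_j]}=\Big(-\frac{\tau^2}{2}\frac{\partial}{\partial\tau}-\sum_{i=0}^{q}i\,\frac{\partial}{\partial x_i}\Big)e^{-\tau[x_0,\ldots,x_q]}.$$
   Context: For $t\in\mathbb{R}$ and numbers $y_0,\dots,y_p$ (repetitions allowed), $e^{t[y_0,\ldots,y_p]}$ denotes the divided difference of $f(x)=e^{tx}$, $f[y_0,\ldots,y_p]=\frac{1}{2\pi i}\oint_\Gamma\frac{f(x)}{\prod_{i=0}^p(x-y_i)}\,\mathrm{d}x$, $\Gamma$ a positively oriented contour enclosing all $y_i$; it is a smooth (indeed analytic) function of $t$ and of the $y_i$. The multiset $[x_0,\ldots,x_q,x_i,x_j]$ consists of $x_0,\ldots,x_q$ plus extra copies of $x_i$ and $x_j$. *)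

From Stdlib Require Import Reals List.
From Coquelicot Require Import Coquelicot.
Open Scope R_scope.

Definition Cexp (z : C) : C := (exp (Re z) * cos (Im z), exp (Re z) * sin (Im z))%R.

Definition node_prod (ys : list C) (z : C) : C :=
  fold_right (fun y acc => Cmult (Cminus z y) acc) (RtoC 1) ys.

(* sum of moduli of the nodes, used to choose a circle enclosing all of them *)
Definition node_radius (ys : list C) : R :=
  1 + fold_right (fun y acc => Cmod y + acc) 0 ys.

(* Divided difference f[y_0,...,y_p] = (1/2 pi i) \oint_Gamma f(x)/prod(x - y_i) dx,
   with Gamma the positively oriented circle |x| = node_radius ys (which encloses
   every node), parametrised by x = r e^{i theta}, dx = i r e^{i theta} d theta. *)
Definition divdiff (f : C -> C) (ys : list C) : C :=
  let r := node_radius ys in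
  let gam := fun th : R => (r * cos th, r * sin th)%R : C in
  Cmult (Cinv (Cmult (RtoC (2 * PI)) Ci))
    (@RInt C_R_CompleteNormedModule
       (fun th : R => Cmult (Cdiv (f (gam th)) (node_prod ys (gam th)))
                             (Cmult Ci (gam th)))
       0 (2 * PI)).

Definition exp_dd (t : R) (ys : list C) : C := divdiff (fun x => Cexp (Cmult (RtoC t) x)) ys.

Definition nodes (x : nat -> C) (q : nat) : list C := map x (seq 0 (S q)).

Definition upd (x : nat -> C) (i : nat) (z : C) : nat -> C :=
  fun k => if Nat.eqb k i then z else x k.

Definition Csum (f : nat -> C) (n : nat) : C :=
  fold_right Cplus (RtoC 0) (map f (seq 0 (S n))).

From Stdlib Require Import Reals List Lra Lia.
From Coquelicot Require Import Coquelicot.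
Open Scope R_scope.

(* Every quantity in the identity is a contour integral
     (1 / 2 pi i) \oint e^{-tau z} g(z) / P(z) dz,   P(z) = prod_k (z - x_k),
   and since the integrand is holomorphic outside the nodes, the circles used by the
   divided differences of the various node lists can all be replaced by one common circle.
   On it: an extra node x_j multiplies g by u_j = 1/(z - x_j); differentiating in tau
   multiplies it by -z; and differentiating in x_i (where the divided difference is, near
   x_i, a Cauchy transform of a continuous density) multiplies it by u_i.  Since
   x_k u_k = z u_k - 1, the double sum collapses, and the difference of the two sides
   becomes the integral of
     e^{-tau z} / P(z) * (z (S_1^2 + S_2) / 2 - S_1 - tau^2 z / 2),   S_m = sum_k u_k^m,
   which is the derivative of e^{-tau z} (1 - z S_1 + tau z) / (2 P(z)); the integral of a
   derivative around a closed circle vanishes. *)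

(** * Finite sums *)

Section FiniteSums.
Local Open Scope C_scope.

Lemma Csum_0 (f : nat -> C) : Csum f 0 = f 0%nat.
Proof. unfold Csum; simpl. ring. Qed.

Lemma Csum_S (f : nat -> C) (n : nat) : Csum f (S n) = Csum f n + f (S n).
Proof.
  unfold Csum. rewrite (seq_S (S n) 0), map_app, fold_right_app.
  cbn [map fold_right Nat.add].
  induction (map f (seq 0 (S n))) as [|a l IH]; cbn [fold_right].
  - ring.
  - rewrite IH. ring.
Qed.

Lemma Csum_ext (f g : nat -> C) (n : nat) :
  (forall k, (k <= n)%nat -> f k = g k) -> Csum f n = Csum g n.
Proof.
  intros H. unfold Csum. f_equal. apply map_ext_in.
  intros k Hk. apply in_seq in Hk. apply H. lia.
Qed.

Lemma Csum_plus (f g : nat -> C) (n : nat) :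
  Csum (fun k => f k + g k) n = Csum f n + Csum g n.
Proof. induction n as [|n IH]; [rewrite !Csum_0 | rewrite !Csum_S, IH]; ring. Qed.

Lemma Csum_mult_l (c : C) (f : nat -> C) (n : nat) :
  Csum (fun k => c * f k) n = c * Csum f n.
Proof. induction n as [|n IH]; [rewrite !Csum_0 | rewrite !Csum_S, IH]; ring. Qed.

Lemma Csum_mult_r (c : C) (f : nat -> C) (n : nat) :
  Csum (fun k => f k * c) n = Csum f n * c.
Proof. induction n as [|n IH]; [rewrite !Csum_0 | rewrite !Csum_S, IH]; ring. Qed.

Lemma Csum_mult_assoc_r (a f : nat -> C) (w : C) (n : nat) :
  Csum (fun k => a k * (f k * w)) n = Csum (fun k => a k * f k) n * w.
Proof. rewrite <- Csum_mult_r. apply Csum_ext. intros k _. ring. Qed.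

Lemma Csum_mult_assoc_l (a f : nat -> C) (c : C) (n : nat) :
  Csum (fun k => a k * (c * f k)) n = c * Csum (fun k => a k * f k) n.
Proof. rewrite <- Csum_mult_l. apply Csum_ext. intros k _. ring. Qed.

Lemma Csum_upper_triangle_mult_r (a : nat -> C) (F : nat -> nat -> C) (w : C) (n : nat) :
  Csum (fun i => Csum (fun j => (if Nat.leb i j then a i else 0) * (F i j * w)) n) n
  = Csum (fun i => Csum (fun j => if Nat.leb i j then a i * F i j else 0) n) n * w.
Proof.
  rewrite <- Csum_mult_r. apply Csum_ext. intros i _.
  rewrite <- Csum_mult_r. apply Csum_ext. intros j _. destruct (Nat.leb i j); ring.
Qed.

Lemma Csum_const_0 (n : nat) : Csum (fun _ => 0) n = 0.
Proof. induction n as [|n IH]; [rewrite Csum_0 | rewrite Csum_S, IH]; ring. Qed.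

Lemma Csum_const_1 (n : nat) : Csum (fun _ => 1) n = INR (S n).
Proof.
  induction n as [|n IH]; [rewrite Csum_0; reflexivity |].
  rewrite Csum_S, IH, (S_INR (S n)), RtoC_plus. reflexivity.
Qed.

Lemma Csum_upper_triangle_S (F : nat -> nat -> C) (n : nat) :
  Csum (fun i => Csum (fun j => if Nat.leb i j then F i j else 0) (S n)) (S n)
  = Csum (fun i => Csum (fun j => if Nat.leb i j then F i j else 0) n) n
    + Csum (fun i => F i (S n)) (S n).
Proof.
  rewrite Csum_S, (Csum_S (fun i => F i (S n))), Csum_S, Nat.leb_refl.
  rewrite (Csum_ext (fun j => if Nat.leb (S n) j then F (S n) j else 0) (fun _ => 0))
    by (intros j Hj; destruct (Nat.leb_spec (S n) j); [lia | reflexivity]).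
  rewrite Csum_const_0.
  rewrite (Csum_ext _ (fun i => Csum (fun j => if Nat.leb i j then F i j else 0) n + F i (S n))).
  - rewrite Csum_plus. ring.
  - intros i Hi. rewrite Csum_S. destruct (Nat.leb_spec i (S n)); [reflexivity | lia].
Qed.

(* Used with [u k = / (z - x k)], for which the hypothesis holds. *)
Lemma Csum_upper_triangle_resolvent (x u : nat -> C) (z : C) (n : nat) :
  (forall k, (k <= n)%nat -> x k * u k = z * u k - 1) ->
  2 * (Csum (fun i => Csum (fun j => if Nat.leb i j then x i * u i * u j else 0) n) n
       + Csum (fun i => INR i * u i) n)
  = z * (Csum u n * Csum u n + Csum (fun k => u k * u k) n) - 2 * Csum u n.
Proof.
  intros Hxu.
  assert (Hlin : forall m, (m <= n)%nat -> Csum (fun i => x i * u i) m = z * Csum u m - INR (S m)).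
  { intros m Hm.
    rewrite (Csum_ext _ (fun k => z * u k + (-1) * 1)) by (intros k Hk; rewrite Hxu by lia; ring).
    rewrite Csum_plus, !Csum_mult_l, Csum_const_1. ring. }
  induction n as [|n IH].
  - rewrite !Csum_0. simpl. rewrite Hxu by lia. ring.
  - specialize (IH (fun k Hk => Hxu k (le_S _ _ Hk)) (fun m Hm => Hlin m (le_S _ _ Hm))).
    rewrite Csum_upper_triangle_S, !Csum_S, (Hxu (S n)) by lia.
    rewrite (Csum_ext (fun i => x i * u i * u (S n)) (fun i => u (S n) * (x i * u i)))
      by (intros; ring).
    rewrite Csum_mult_l, Hlin by lia.
    transitivity
      (2 * (Csum (fun i => Csum (fun j => if Nat.leb i j then x i * u i * u j else 0) n) n
            + Csum (fun i => INR i * u i) n)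
       + 2 * (u (S n) * (z * Csum u n - INR (S n)) + (z * u (S n) - 1) * u (S n)
              + INR (S n) * u (S n))); [ring |].
    rewrite IH. ring.
Qed.

End FiniteSums.

(** * Complex-valued functions of a real variable *)

Notation is_derive_RC := (@is_derive R_AbsRing C_R_NormedModule).

(* Splits [is_derive f t l] into [is_derive f t ?l'] and [?l' = l]. *)
Ltac derive_up_to_eq :=
  match goal with |- @is_derive ?K ?V ?f ?t _ => eapply (eq_rect _ (@is_derive K V f t)) end.

(* [ring] and [field] only recognise equalities stated at type [C], not at the carrier of a
   normed module. *)
Ltac change_eq_C := cbv beta; match goal with |- ?a = ?b => change (@eq C a b) end.

Ltac R_module_ring :=
  cbv beta; unfold minus; simpl; unfold opp, plus, scal; simpl; unfold mult; simpl; ring.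

Lemma norm_C_R (z : C) : @norm R_AbsRing C_R_NormedModule z = Cmod z.
Proof.
  destruct z as [a b]. unfold Cmod. simpl fst; simpl snd.
  change (@norm _ C_R_NormedModule (a, b)) with (sqrt (Rabs a ^ 2 + Rabs b ^ 2)).
  now rewrite !pow2_abs.
Qed.

Lemma is_linear_C_fst :
  @is_linear R_AbsRing C_R_NormedModule R_NormedModule (fun z : C => fst z).
Proof.
  split; try reflexivity.
  exists 1. split; [lra |]. intros z. rewrite Rmult_1_l, norm_C_R.
  eapply Rle_trans; [apply Rmax_l | apply Rmax_Cmod].
Qed.

Lemma is_linear_C_snd :
  @is_linear R_AbsRing C_R_NormedModule R_NormedModule (fun z : C => snd z).
Proof.
  split; try reflexivity.
  exists 1. split; [lra |]. intros z. rewrite Rmult_1_l, norm_C_R.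
  eapply Rle_trans; [apply Rmax_r | apply Rmax_Cmod].
Qed.

Lemma is_derive_RC_components (f : R -> C) (t : R) (l : C) :
  is_derive_RC f t l <->
  is_derive (fun u => fst (f u)) t (fst l) /\ is_derive (fun u => snd (f u)) t (snd l).
Proof.
  split.
  - intros Hf. split.
    + eapply filterdiff_ext_lin.
      * exact (filterdiff_comp f _ _ _ Hf (filterdiff_linear _ is_linear_C_fst)).
      * reflexivity.
    + eapply filterdiff_ext_lin.
      * exact (filterdiff_comp f _ _ _ Hf (filterdiff_linear _ is_linear_C_snd)).
      * reflexivity.
  - intros [H1 H2].
    assert (Hdec : forall z : C,
      z = @plus C_R_NormedModule (@scal R_AbsRing C_R_NormedModule (fst z) (1, 0))
                                 (@scal R_AbsRing C_R_NormedModule (snd z) (0, 1))).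
    { intros [a b]. simpl. unfold plus, scal; simpl. unfold prod_plus, prod_scal; simpl.
      unfold plus, scal; simpl. unfold mult; simpl. f_equal; ring. }
    rewrite (Hdec l). apply (is_derive_ext (fun u => @plus C_R_NormedModule
      (@scal R_AbsRing C_R_NormedModule (fst (f u)) (1, 0))
      (@scal R_AbsRing C_R_NormedModule (snd (f u)) (0, 1)))).
    + intros u. now rewrite <- Hdec.
    + apply is_derive_plus; apply is_derive_scal_l; assumption.
Qed.

Lemma is_derive_Rmult (f g : R -> R) (t a b : R) :
  is_derive f t a -> is_derive g t b -> is_derive (fun u => f u * g u) t (a * g t + f t * b).
Proof. intros Hf Hg. apply (is_derive_mult f g t a b); auto. intros; apply Rmult_comm. Qed.

Section CurveDerivativeRules.
Local Open Scope C_scope.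

Lemma is_derive_RC_const (c : C) (t : R) : is_derive_RC (fun _ => c) t (0 : C).
Proof.
  apply is_derive_RC_components; simpl; split; apply (is_derive_const (V := R_NormedModule)).
Qed.

Lemma is_derive_RC_RtoC (f : R -> R) (t a : R) :
  is_derive f t a -> is_derive_RC (fun u => RtoC (f u)) t (RtoC a).
Proof.
  intros H. apply is_derive_RC_components; simpl; split;
    [exact H | apply (is_derive_const (V := R_NormedModule))].
Qed.

Lemma is_derive_RC_plus (f g : R -> C) (t : R) (a b : C) :
  is_derive_RC f t a -> is_derive_RC g t b -> is_derive_RC (fun u => f u + g u) t (a + b).
Proof.
  intros [Hf1 Hf2]%is_derive_RC_components [Hg1 Hg2]%is_derive_RC_components.
  apply is_derive_RC_components; simpl; split.
  - exact (is_derive_plus (fun u => fst (f u)) (fun u => fst (g u)) t _ _ Hf1 Hg1).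
  - exact (is_derive_plus (fun u => snd (f u)) (fun u => snd (g u)) t _ _ Hf2 Hg2).
Qed.

Lemma is_derive_RC_opp (f : R -> C) (t : R) (a : C) :
  is_derive_RC f t a -> is_derive_RC (fun u => - f u) t (- a).
Proof.
  intros [Hf1 Hf2]%is_derive_RC_components.
  apply is_derive_RC_components; simpl; split.
  - exact (is_derive_opp (fun u => fst (f u)) t _ Hf1).
  - exact (is_derive_opp (fun u => snd (f u)) t _ Hf2).
Qed.

Lemma is_derive_RC_mult (f g : R -> C) (t : R) (a b : C) :
  is_derive_RC f t a -> is_derive_RC g t b ->
  is_derive_RC (fun u => f u * g u) t (a * g t + f t * b).
Proof.
  intros [Hf1 Hf2]%is_derive_RC_components [Hg1 Hg2]%is_derive_RC_components.
  apply is_derive_RC_components; simpl; split; derive_up_to_eq.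
  - apply (is_derive_minus (fun u => fst (f u) * fst (g u))%R (fun u => snd (f u) * snd (g u))%R);
      apply is_derive_Rmult; eassumption.
  - R_module_ring.
  - apply (is_derive_plus (fun u => fst (f u) * snd (g u))%R (fun u => snd (f u) * fst (g u))%R);
      apply is_derive_Rmult; eassumption.
  - R_module_ring.
Qed.

Lemma is_derive_RC_Cexp (f : R -> C) (t : R) (a : C) :
  is_derive_RC f t a -> is_derive_RC (fun u => Cexp (f u)) t (Cexp (f t) * a).
Proof.
  intros [Hf1 Hf2]%is_derive_RC_components.
  assert (He := is_derive_comp exp (fun u => fst (f u)) t _ _ (is_derive_exp _) Hf1).
  assert (Hc := is_derive_comp cos (fun u => snd (f u)) t _ _ (is_derive_cos _) Hf2).
  assert (Hs := is_derive_comp sin (fun u => snd (f u)) t _ _ (is_derive_sin _) Hf2).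
  apply is_derive_RC_components; unfold Cexp, Re, Im; simpl; split; derive_up_to_eq.
  1, 3: apply is_derive_Rmult; eassumption.
  all: R_module_ring.
Qed.

Lemma is_derive_RC_inv (f : R -> C) (t : R) (a : C) :
  is_derive_RC f t a -> f t <> 0 -> is_derive_RC (fun u => / f u) t (- a / (f t * f t)).
Proof.
  intros [Hf1 Hf2]%is_derive_RC_components Hnz.
  assert (HN : (0 < fst (f t) ^ 2 + snd (f t) ^ 2)%R).
  { destruct (f t) as [p q]; simpl.
    destruct (Req_dec p 0), (Req_dec q 0); [subst; now contradict Hnz | nra ..]. }
  assert (HdN : is_derive (fun u => fst (f u) ^ 2 + snd (f u) ^ 2)%R t
                  (2 * fst (f t) * fst a + 2 * snd (f t) * snd a)%R).
  { derive_up_to_eq.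
    - apply (is_derive_plus (fun u => fst (f u) ^ 2)%R (fun u => snd (f u) ^ 2)%R);
        apply is_derive_pow; eassumption.
    - R_module_ring. }
  apply is_derive_RC_components; unfold Cinv; simpl; split; derive_up_to_eq.
  1: apply (is_derive_div (fun u => fst (f u))); [exact Hf1 | exact HdN | lra].
  2: apply (is_derive_div (fun u => - snd (f u))%R);
       [exact (is_derive_opp (fun u => snd (f u)) t _ Hf2) | exact HdN | lra].
  all: cbv beta; destruct (f t) as [p q], a as [u v]; simpl in *; unfold opp; simpl.
  all: replace ((p * p - q * q) * ((p * p - q * q) * 1) + (p * q + q * p) * ((p * q + q * p) * 1))%R
         with ((p * p + q * q) ^ 2)%R by ring.
  all: field; nra.
Qed.

End CurveDerivativeRules.

Lemma is_derive_RC_Csum (f : nat -> R -> C) (f' : nat -> C) (n : nat) (t : R) :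
  (forall k, (k <= n)%nat -> is_derive_RC (f k) t (f' k)) ->
  is_derive_RC (fun u => Csum (fun k => f k u) n) t (Csum f' n).
Proof.
  intros H. induction n as [|n IH].
  - rewrite Csum_0. apply (is_derive_ext (f 0%nat)); [intros u; now rewrite Csum_0 | apply H; lia].
  - rewrite Csum_S. apply (is_derive_ext (fun u => Cplus (Csum (fun k => f k u) n) (f (S n) u))).
    + intros u. now rewrite Csum_S.
    + apply is_derive_RC_plus; [apply IH; intros; apply H | apply H]; lia.
Qed.

Section ComplexContinuity.
Context {U : UniformSpace}.
Local Open Scope C_scope.

Lemma continuous_C_components (f : U -> C) (x : U) :
  continuous f x <-> continuous (fun y => fst (f y)) x /\ continuous (fun y => snd (f y)) x.
Proof.
  split.
  - intros Hf. split; apply (continuous_comp f); auto; destruct (f x).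
    + apply (@continuous_fst R_UniformSpace R_UniformSpace).
    + apply (@continuous_snd R_UniformSpace R_UniformSpace).
  - intros [H1 H2].
    assert (Hpair : continuous (fun y => (fst (f y), snd (f y)) : C) x).
    { apply (continuous_comp_2 (fun y => fst (f y)) (fun y => snd (f y)) (fun a b => (a, b) : C));
        auto.
      intros P HP. unfold filtermap. revert HP. apply filter_imp. now intros [u v]. }
    assert (Eta : forall y, ((fst (f y), snd (f y)) : C) = f y) by (intros y; now destruct (f y)).
    unfold continuous in *. rewrite Eta in Hpair.
    eapply filterlim_ext; [exact Eta | exact Hpair].
Qed.

Lemma continuous_RtoC (f : U -> R) (x : U) :
  continuous f x -> continuous (fun y => RtoC (f y)) x.
Proof. intros H. apply continuous_C_components; split; [exact H | apply continuous_const]. Qed.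

Lemma continuous_Cplus (f g : U -> C) (x : U) :
  continuous f x -> continuous g x -> continuous (fun y => f y + g y) x.
Proof.
  intros [Hf1 Hf2]%continuous_C_components [Hg1 Hg2]%continuous_C_components.
  apply continuous_C_components; split; simpl.
  - exact (continuous_plus (fun y => fst (f y)) (fun y => fst (g y)) x Hf1 Hg1).
  - exact (continuous_plus (fun y => snd (f y)) (fun y => snd (g y)) x Hf2 Hg2).
Qed.

Lemma continuous_Copp (f : U -> C) (x : U) :
  continuous f x -> continuous (fun y => - f y) x.
Proof.
  intros [Hf1 Hf2]%continuous_C_components.
  apply continuous_C_components; split; simpl.
  - exact (continuous_opp (fun y => fst (f y)) x Hf1).
  - exact (continuous_opp (fun y => snd (f y)) x Hf2).
Qed.

Lemma continuous_Cminus (f g : U -> C) (x : U) :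
  continuous f x -> continuous g x -> continuous (fun y => f y - g y) x.
Proof. intros Hf Hg. apply continuous_Cplus; [exact Hf | apply continuous_Copp, Hg]. Qed.

Lemma continuous_Rmult (f g : U -> R) (x : U) :
  continuous f x -> continuous g x -> continuous (fun y => f y * g y)%R x.
Proof. intros Hf Hg. apply (@continuous_mult U R_AbsRing f g); assumption. Qed.

Lemma continuous_Cmult (f g : U -> C) (x : U) :
  continuous f x -> continuous g x -> continuous (fun y => f y * g y) x.
Proof.
  intros [Hf1 Hf2]%continuous_C_components [Hg1 Hg2]%continuous_C_components.
  apply continuous_C_components; split; simpl.
  - apply (continuous_plus (fun y => fst (f y) * fst (g y))%R
                           (fun y => - (snd (f y) * snd (g y)))%R).
    + now apply continuous_Rmult.
    + apply (continuous_opp (fun y => snd (f y) * snd (g y))%R). now apply continuous_Rmult.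
  - apply (continuous_plus (fun y => fst (f y) * snd (g y))%R (fun y => snd (f y) * fst (g y))%R);
      now apply continuous_Rmult.
Qed.

Lemma continuous_Cexp (f : U -> C) (x : U) :
  continuous f x -> continuous (fun y => Cexp (f y)) x.
Proof.
  intros [Hf1 Hf2]%continuous_C_components.
  assert (Hexp : continuous (fun y => exp (fst (f y))) x)
    by (apply continuous_comp;
        [assumption | apply (continuous_exp_comp (fun t => t)), continuous_id]).
  assert (Hcos : continuous (fun y => cos (snd (f y))) x)
    by (apply continuous_comp;
        [assumption | apply (continuous_cos_comp (fun t => t)), continuous_id]).
  assert (Hsin : continuous (fun y => sin (snd (f y))) x)
    by (apply continuous_comp;
        [assumption | apply (continuous_sin_comp (fun t => t)), continuous_id]).
  apply continuous_C_components; unfold Cexp, Re, Im; simpl; split; now apply continuous_Rmult.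
Qed.

Lemma continuous_Cinv (f : U -> C) (x : U) :
  continuous f x -> f x <> 0 -> continuous (fun y => / f y) x.
Proof.
  intros Hf Hnz. pose proof Hf as [Hf1 Hf2]%continuous_C_components.
  assert (HN : (fst (f x) ^ 2 + snd (f x) ^ 2 <> 0)%R).
  { destruct (f x) as [p q]; simpl.
    destruct (Req_dec p 0), (Req_dec q 0); [subst; now contradict Hnz | nra ..]. }
  assert (HcN : continuous (fun y => fst (f y) ^ 2 + snd (f y) ^ 2)%R x).
  { apply (continuous_plus (fun y => fst (f y) ^ 2)%R (fun y => snd (f y) ^ 2)%R); simpl;
      apply continuous_Rmult; try apply continuous_Rmult; auto; apply continuous_const. }
  assert (HcI : continuous (fun y => / (fst (f y) ^ 2 + snd (f y) ^ 2))%R x).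
  { apply continuous_comp; [exact HcN |].
    apply (continuous_Rinv_comp (fun t => t)); [apply continuous_id | exact HN]. }
  apply continuous_C_components; unfold Cinv; simpl; split; apply continuous_Rmult; auto.
  exact (continuous_opp (fun y => snd (f y)) x Hf2).
Qed.

Lemma continuous_Cmod (f : U -> C) (x : U) :
  continuous f x -> continuous (fun y => Cmod (f y)) x.
Proof.
  intros [Hf1 Hf2]%continuous_C_components. unfold Cmod.
  apply continuous_comp; [| apply (continuous_sqrt_comp (fun t => t)), continuous_id].
  apply (continuous_plus (fun y => fst (f y) ^ 2)%R (fun y => snd (f y) ^ 2)%R); simpl;
    apply continuous_Rmult; try apply continuous_Rmult; auto; apply continuous_const.
Qed.

Lemma continuous_Csum (f : nat -> U -> C) (n : nat) (x : U) :
  (forall k, (k <= n)%nat -> continuous (f k) x) ->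
  continuous (fun y => Csum (fun k => f k y) n) x.
Proof.
  intros H. induction n as [|n IH].
  - apply (filterlim_ext (f 0%nat)); [intros y; now rewrite Csum_0 |].
    rewrite Csum_0. apply H. lia.
  - apply (filterlim_ext (fun y => Csum (fun k => f k y) n + f (S n) y));
      [intros y; now rewrite Csum_S |].
    rewrite Csum_S. apply continuous_Cplus; [apply IH; intros; apply H | apply H]; lia.
Qed.

End ComplexContinuity.

Notation RInt_C := (@RInt C_R_CompleteNormedModule).
Notation is_RInt_C := (@is_RInt C_R_NormedModule).

Section ComplexIntegrals.
Local Open Scope C_scope.

Lemma is_RInt_C_plus (f g : R -> C) (a b : R) (If Ig : C) :
  is_RInt_C f a b If -> is_RInt_C g a b Ig -> is_RInt_C (fun t => f t + g t) a b (If + Ig).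
Proof. apply (is_RInt_plus (V := C_R_NormedModule)). Qed.

Lemma is_RInt_C_minus (f g : R -> C) (a b : R) (If Ig : C) :
  is_RInt_C f a b If -> is_RInt_C g a b Ig -> is_RInt_C (fun t => f t - g t) a b (If - Ig).
Proof. apply (is_RInt_minus (V := C_R_NormedModule)). Qed.

Lemma is_RInt_C_mult_l (c : C) (f : R -> C) (a b : R) (If : C) :
  is_RInt_C f a b If -> is_RInt_C (fun t => c * f t) a b (c * If).
Proof.
  intros H.
  assert (H1 := is_RInt_fct_extend_fst (U := R_NormedModule) (V := R_NormedModule) f a b If H).
  assert (H2 := is_RInt_fct_extend_snd (U := R_NormedModule) (V := R_NormedModule) f a b If H).
  destruct c as [c1 c2], If as [I1 I2]; simpl in H1, H2.
  apply (is_RInt_fct_extend_pair (U := R_NormedModule) (V := R_NormedModule)); simpl.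
  - apply (is_RInt_minus (V := R_NormedModule)
             (fun t => c1 * fst (f t))%R (fun t => c2 * snd (f t))%R).
    + exact (is_RInt_scal (V := R_NormedModule) _ a b c1 I1 H1).
    + exact (is_RInt_scal (V := R_NormedModule) _ a b c2 I2 H2).
  - apply (is_RInt_plus (V := R_NormedModule)
             (fun t => c1 * snd (f t))%R (fun t => c2 * fst (f t))%R).
    + exact (is_RInt_scal (V := R_NormedModule) _ a b c1 I2 H2).
    + exact (is_RInt_scal (V := R_NormedModule) _ a b c2 I1 H1).
Qed.

Lemma is_RInt_C_Csum (f : nat -> R -> C) (If : nat -> C) (n : nat) (a b : R) :
  (forall k, (k <= n)%nat -> is_RInt_C (f k) a b (If k)) ->
  is_RInt_C (fun t => Csum (fun k => f k t) n) a b (Csum If n).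
Proof.
  intros H. induction n as [|n IH].
  - rewrite Csum_0. apply (is_RInt_ext (V := C_R_NormedModule) (f 0%nat)).
    + intros t _. now rewrite Csum_0.
    + apply H. lia.
  - rewrite Csum_S.
    apply (is_RInt_ext (V := C_R_NormedModule) (fun t => Csum (fun k => f k t) n + f (S n) t)).
    + intros t _. now rewrite Csum_S.
    + apply is_RInt_C_plus; [apply IH; intros; apply H | apply H]; lia.
Qed.

Lemma is_RInt_C_continuous (f : R -> C) (a b : R) :
  a <= b -> (forall t, a <= t <= b -> continuous f t) -> is_RInt_C f a b (RInt_C f a b).
Proof.
  intros Hab H. apply (RInt_correct (V := C_R_CompleteNormedModule)).
  apply (ex_RInt_continuous (V := C_R_CompleteNormedModule)).
  now rewrite Rmin_left, Rmax_right by lra.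
Qed.

Lemma Cmod_is_RInt_C_le (f : R -> C) (a b : R) (If : C) (M : R) :
  a <= b -> is_RInt_C f a b If -> (forall t, a <= t <= b -> Cmod (f t) <= M) ->
  Cmod If <= (b - a) * M.
Proof.
  intros Hab HI HM. rewrite <- norm_C_R.
  apply (norm_RInt_le (V := C_R_NormedModule) f (fun _ => M) a b If); auto.
  - intros t Ht. rewrite norm_C_R. auto.
  - apply (is_RInt_const (V := R_NormedModule)).
Qed.

Lemma is_RInt_C_derive (F f : R -> C) (a b : R) :
  a <= b -> (forall t, a <= t <= b -> is_derive_RC F t (f t)) ->
  (forall t, a <= t <= b -> continuous f t) ->
  is_RInt_C f a b (F b - F a).
Proof.
  intros Hab Hd Hc.
  apply (is_RInt_derive (V := C_R_CompleteNormedModule)); now rewrite Rmin_left, Rmax_right by lra.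
Qed.

Lemma RInt_C_components (f : R -> C) (a b : R) :
  ex_RInt (V := C_R_CompleteNormedModule) f a b ->
  RInt_C f a b = (RInt (fun t => fst (f t)) a b, RInt (fun t => snd (f t)) a b).
Proof.
  intros H. symmetry.
  apply (RInt_fct_extend_pair (U := R_NormedModule) (V := R_NormedModule)
           (@RInt R_CompleteNormedModule) (@RInt R_CompleteNormedModule)).
  - intros. now apply is_RInt_unique.
  - intros. now apply is_RInt_unique.
  - now apply (RInt_correct (V := C_R_CompleteNormedModule)).
Qed.

End ComplexIntegrals.

Lemma is_derive_RInt_param_continuous (F D : R -> R -> R) (a b x : R) :
  a <= b ->
  locally x (fun u => forall t, is_derive (fun v => F v t) u (D u t)) ->
  (forall t, a <= t <= b -> continuous (fun p : R * R => D (fst p) (snd p)) (x, t)) ->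
  locally x (fun u => ex_RInt (F u) a b) ->
  is_derive (fun u => RInt (F u) a b) x (RInt (D x) a b).
Proof.
  intros Hab Hd Hc Hi.
  assert (HD : RInt (fun t => Derive (fun u => F u t) x) a b = RInt (D x) a b).
  { apply RInt_ext. intros t _. apply is_derive_unique. now apply locally_singleton in Hd. }
  rewrite <- HD. apply (is_derive_RInt_param F a b x); auto.
  - revert Hd. apply filter_imp. intros u Hu t _. eexists. apply Hu.
  - intros t Ht. apply continuity_2d_pt_ext_loc with (f := D).
    + apply locally_2d_locally.
      assert (Hd2 : locally (x, t) (fun z : R * R =>
                      forall s, is_derive (fun v => F v s) (fst z) (D (fst z) s)))
        by exact (@continuous_fst R_UniformSpace R_UniformSpace x t _ Hd).
      revert Hd2. apply filter_imp. intros z Hz. symmetry. apply is_derive_unique, Hz.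
    + apply continuity_2d_pt_filterlim. apply Hc. now rewrite Rmin_left, Rmax_right in Ht by lra.
Qed.

Lemma continuous_slice (D : R -> R -> C) (x t : R) :
  continuous (fun p : R * R => D (fst p) (snd p)) (x, t) -> continuous (D x) t.
Proof.
  intros H.
  apply (continuous_comp (fun s : R => (x, s)) (fun p : R * R => D (fst p) (snd p)) t); [|exact H].
  apply (continuous_comp_2 (fun _ : R => x) (fun s : R => s) (fun a b => (a, b))).
  - apply continuous_const.
  - apply continuous_id.
  - intros P HP. unfold filtermap. revert HP. apply filter_imp. now intros [u v].
Qed.

Lemma is_derive_RC_RInt_param (F D : R -> R -> C) (a b x : R) :
  a <= b ->
  locally x (fun u => forall t, is_derive_RC (fun v => F v t) u (D u t)) ->
  (forall t, a <= t <= b -> continuous (fun p : R * R => D (fst p) (snd p)) (x, t)) ->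
  locally x (fun u => forall t, a <= t <= b -> continuous (F u) t) ->
  is_derive_RC (fun u => RInt_C (F u) a b) x (RInt_C (D x) a b).
Proof.
  intros Hab Hd Hc Hi.
  assert (Hex : locally x (fun u => ex_RInt (V := C_R_CompleteNormedModule) (F u) a b)).
  { revert Hi. apply filter_imp. intros u Hu.
    apply (ex_RInt_continuous (V := C_R_CompleteNormedModule)).
    now rewrite Rmin_left, Rmax_right by lra. }
  rewrite (RInt_C_components (D x)).
  2:{ apply (ex_RInt_continuous (V := C_R_CompleteNormedModule)).
      rewrite Rmin_left, Rmax_right by lra. intros t Ht. now apply continuous_slice, Hc. }
  apply (is_derive_ext_loc (fun u =>
           (RInt (fun t => fst (F u t)) a b, RInt (fun t => snd (F u t)) a b) : C)).
  { revert Hex. apply filter_imp. intros u Hu. symmetry. now apply RInt_C_components. }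
  apply is_derive_RC_components; simpl; split.
  - apply (is_derive_RInt_param_continuous (fun u t => fst (F u t)) (fun u t => fst (D u t))); auto.
    + revert Hd. apply filter_imp. intros u Hu t. now apply is_derive_RC_components.
    + intros t Ht. now apply continuous_C_components, Hc.
    + revert Hex. apply filter_imp. intros u Hu.
      exact (ex_RInt_fct_extend_fst (U := R_NormedModule) (V := R_NormedModule) _ _ _ Hu).
  - apply (is_derive_RInt_param_continuous (fun u t => snd (F u t)) (fun u t => snd (D u t))); auto.
    + revert Hd. apply filter_imp. intros u Hu t. now apply is_derive_RC_components.
    + intros t Ht. now apply continuous_C_components, Hc.
    + revert Hex. apply filter_imp. intros u Hu.
      exact (ex_RInt_fct_extend_snd (U := R_NormedModule) (V := R_NormedModule) _ _ _ Hu).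
Qed.

(** * Circles and node products *)

Definition circle (r theta : R) : C := (r * cos theta, r * sin theta).
Definition Cexpi (theta : R) : C := (cos theta, sin theta).

Fixpoint node_prod_deriv (ys : list C) (z : C) : C :=
  match ys with
  | nil => 0
  | y :: ys' => (node_prod ys' z + (z - y) * node_prod_deriv ys' z)%C
  end.

Definition maxmod (ys : list C) : R := fold_right (fun y acc => Rmax (Cmod y) acc) 0 ys.

Section CircleAndNodes.
Local Open Scope C_scope.

Lemma circle_Cexpi (r theta : R) : circle r theta = r * Cexpi theta.
Proof. unfold circle, Cexpi, RtoC, Cmult; simpl. f_equal; ring. Qed.

Lemma circle_2PI (r : R) : circle r (2 * PI) = circle r 0.
Proof. unfold circle. now rewrite cos_2PI, sin_2PI, cos_0, sin_0. Qed.

Lemma Cexpi_2PI : Cexpi (2 * PI) = Cexpi 0.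
Proof. unfold Cexpi. now rewrite cos_2PI, sin_2PI, cos_0, sin_0. Qed.

Lemma Cmod_circle (r theta : R) : 0 <= r -> Cmod (circle r theta) = r.
Proof.
  intros Hr. unfold circle, Cmod; simpl.
  replace (r * cos theta * (r * cos theta * 1) + r * sin theta * (r * sin theta * 1))%R
    with (r * r * (Rsqr (sin theta) + Rsqr (cos theta)))%R by (unfold Rsqr; ring).
  rewrite sin2_cos2, Rmult_1_r. now apply sqrt_square.
Qed.

Lemma is_derive_RC_Cexpi (theta : R) : is_derive_RC Cexpi theta (Ci * Cexpi theta).
Proof.
  apply is_derive_RC_components; unfold Cexpi; simpl; split; derive_up_to_eq.
  - apply is_derive_cos.
  - R_module_ring.
  - apply is_derive_sin.
  - R_module_ring.
Qed.

Lemma is_derive_RC_circle_angle (r theta : R) :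
  is_derive_RC (circle r) theta (Ci * circle r theta).
Proof.
  apply (is_derive_ext (fun t => r * Cexpi t)); [intros t; now rewrite circle_Cexpi |].
  derive_up_to_eq.
  - apply is_derive_RC_mult; [apply is_derive_RC_const | apply is_derive_RC_Cexpi].
  - (* [ring] does not terminate on the pair [Cexpi theta]; abstract it first. *)
    change_eq_C. rewrite circle_Cexpi. generalize (Cexpi theta). intros e. ring.
Qed.

Lemma is_derive_RC_circle_radius (r theta : R) :
  is_derive_RC (fun u => circle u theta) r (Cexpi theta).
Proof.
  apply (is_derive_ext (fun u => RtoC u * Cexpi theta)); [intros u; now rewrite circle_Cexpi |].
  derive_up_to_eq.
  - apply is_derive_RC_mult; [apply is_derive_RC_RtoC, is_derive_id | apply is_derive_RC_const].
  - change_eq_C. generalize (Cexpi theta). intros e. unfold one; simpl. ring.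
Qed.

Lemma continuous_Cexpi {U : UniformSpace} (b : U -> R) (x : U) :
  continuous b x -> continuous (fun y => Cexpi (b y)) x.
Proof.
  intros Hb. apply continuous_C_components; unfold Cexpi; simpl; split; apply continuous_comp; auto.
  - apply (continuous_cos_comp (fun t => t)), continuous_id.
  - apply (continuous_sin_comp (fun t => t)), continuous_id.
Qed.

Lemma continuous_circle {U : UniformSpace} (a b : U -> R) (x : U) :
  continuous a x -> continuous b x -> continuous (fun y => circle (a y) (b y)) x.
Proof.
  intros Ha Hb. apply continuous_C_components; unfold circle; simpl; split;
    apply continuous_Rmult; auto; apply continuous_comp; auto.
  - apply (continuous_cos_comp (fun t => t)), continuous_id.
  - apply (continuous_sin_comp (fun t => t)), continuous_id.
Qed.

Lemma continuous_node_prod {U : UniformSpace} (ys : list C) (f : U -> C) (x : U) :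
  continuous f x -> continuous (fun y => node_prod ys (f y)) x.
Proof.
  intros Hf. induction ys as [|a ys IH]; simpl.
  - apply continuous_const.
  - apply continuous_Cmult; [| exact IH].
    apply continuous_Cminus; [exact Hf | apply continuous_const].
Qed.

Lemma continuous_node_prod_deriv {U : UniformSpace} (ys : list C) (f : U -> C) (x : U) :
  continuous f x -> continuous (fun y => node_prod_deriv ys (f y)) x.
Proof.
  intros Hf. induction ys as [|a ys IH]; simpl.
  - apply continuous_const.
  - apply continuous_Cplus; [now apply continuous_node_prod |].
    apply continuous_Cmult; [| exact IH].
    apply continuous_Cminus; [exact Hf | apply continuous_const].
Qed.

Lemma node_prod_nil (z : C) : node_prod nil z = 1.
Proof. reflexivity. Qed.

Lemma node_prod_cons (y : C) (ys : list C) (z : C) :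
  node_prod (y :: ys) z = (z - y) * node_prod ys z.
Proof. reflexivity. Qed.

Lemma node_prod_app (l1 l2 : list C) (z : C) :
  node_prod (l1 ++ l2) z = node_prod l1 z * node_prod l2 z.
Proof. induction l1 as [|a l1 IH]; simpl; [|rewrite IH]; ring. Qed.

Lemma maxmod_nonneg (ys : list C) : 0 <= maxmod ys.
Proof. induction ys as [|y ys IH]; simpl; [lra | eapply Rle_trans; [exact IH | apply Rmax_r]]. Qed.

Lemma maxmod_ge (ys : list C) (y : C) : In y ys -> Cmod y <= maxmod ys.
Proof.
  induction ys as [|a ys IH]; simpl; [tauto|].
  intros [->|H]; [apply Rmax_l | eapply Rle_trans; [now apply IH | apply Rmax_r]].
Qed.

Lemma maxmod_le (ys : list C) (M : R) :
  0 <= M -> (forall y, In y ys -> Cmod y <= M) -> maxmod ys <= M.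
Proof.
  induction ys as [|a ys IH]; simpl; intros HM H; [lra|].
  apply Rmax_lub; [now apply H; left | apply IH; auto].
Qed.

Lemma node_radius_gt (ys : list C) : maxmod ys < node_radius ys.
Proof.
  unfold node_radius.
  enough (maxmod ys <= fold_right (fun y acc => Cmod y + acc)%R 0 ys) by lra.
  induction ys as [|y ys IH]; simpl; [lra|].
  assert (0 <= fold_right (fun y acc => Cmod y + acc)%R 0 ys).
  { clear IH. induction ys as [|a ys IH']; simpl; [lra | pose proof (Cmod_ge_0 a); lra]. }
  pose proof (Cmod_ge_0 y). apply Rmax_lub; lra.
Qed.

Lemma Cminus_neq_0_outside (ys : list C) (y z : C) :
  In y ys -> maxmod ys < Cmod z -> z - y <> 0.
Proof.
  intros Hy Hz E. assert (z = y) by (replace z with (z - y + y) by ring; rewrite E; ring).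
  subst. pose proof (maxmod_ge ys y Hy). lra.
Qed.

Lemma node_prod_neq_0 (ys : list C) (z : C) : maxmod ys < Cmod z -> node_prod ys z <> 0.
Proof.
  intros Hz. induction ys as [|y ys IH]; simpl.
  - intros E. injection E. lra.
  - apply Cmult_neq_0.
    + apply (Cminus_neq_0_outside (y :: ys)); [now left | exact Hz].
    + apply IH. eapply Rle_lt_trans; [apply Rmax_r | exact Hz].
Qed.

Lemma node_prod_deriv_eq (ys : list C) (z : C) :
  (forall y, In y ys -> z - y <> 0) ->
  node_prod_deriv ys z = node_prod ys z * fold_right (fun y acc => / (z - y) + acc) 0 ys.
Proof.
  induction ys as [|y ys IH]; intros Hnz; cbn [node_prod_deriv fold_right]; [ring |].
  rewrite IH by (intros; apply Hnz; now right).
  rewrite node_prod_cons. field. apply Hnz. now left.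
Qed.

End CircleAndNodes.

(** * Holomorphy along curves and circle integrals *)

(* Complex differentiability of [f] on [D], with derivative [f'], encoded as the chain rule
   along differentiable real curves: this is all the contour arguments below need. *)
Definition holomorphic_on (D : C -> Prop) (f f' : C -> C) : Prop :=
  forall (phi : R -> C) (phi' : C) (s : R), D (phi s) -> is_derive_RC phi s phi' ->
    is_derive_RC (fun t => f (phi t)) s (f' (phi s) * phi')%C.

Section HolomorphicRules.
Variable D : C -> Prop.
Local Open Scope C_scope.

Lemma holomorphic_on_ext (f f' g' : C -> C) :
  (forall z, D z -> f' z = g' z) -> holomorphic_on D f f' -> holomorphic_on D f g'.
Proof. intros E Hf phi phi' s Hs Hphi. rewrite <- E by exact Hs. eapply Hf; eassumption. Qed.

Lemma holomorphic_on_const (c : C) : holomorphic_on D (fun _ => c) (fun _ => 0).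
Proof.
  intros phi phi' s _ _. derive_up_to_eq; [apply is_derive_RC_const | change_eq_C; ring].
Qed.

Lemma holomorphic_on_id : holomorphic_on D (fun z => z) (fun _ => 1).
Proof. intros phi phi' s _ Hphi. derive_up_to_eq; [exact Hphi | change_eq_C; ring]. Qed.

Lemma holomorphic_on_plus (f f' g g' : C -> C) :
  holomorphic_on D f f' -> holomorphic_on D g g' ->
  holomorphic_on D (fun z => f z + g z) (fun z => f' z + g' z).
Proof.
  intros Hf Hg phi phi' s Hs Hphi. derive_up_to_eq.
  - apply is_derive_RC_plus; [eapply Hf; eassumption | eapply Hg; eassumption].
  - change_eq_C. ring.
Qed.

Lemma holomorphic_on_opp (f f' : C -> C) :
  holomorphic_on D f f' -> holomorphic_on D (fun z => - f z) (fun z => - f' z).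
Proof.
  intros Hf phi phi' s Hs Hphi. derive_up_to_eq.
  - apply is_derive_RC_opp. eapply Hf; eassumption.
  - change_eq_C. ring.
Qed.

Lemma holomorphic_on_mult (f f' g g' : C -> C) :
  holomorphic_on D f f' -> holomorphic_on D g g' ->
  holomorphic_on D (fun z => f z * g z) (fun z => f' z * g z + f z * g' z).
Proof.
  intros Hf Hg phi phi' s Hs Hphi. derive_up_to_eq.
  - apply is_derive_RC_mult; [eapply Hf; eassumption | eapply Hg; eassumption].
  - change_eq_C. ring.
Qed.

Lemma holomorphic_on_inv (f f' : C -> C) :
  (forall z, D z -> f z <> 0) -> holomorphic_on D f f' ->
  holomorphic_on D (fun z => / f z) (fun z => - f' z / (f z * f z)).
Proof.
  intros Hnz Hf phi phi' s Hs Hphi. derive_up_to_eq.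
  - apply is_derive_RC_inv; [eapply Hf; eassumption | now apply Hnz].
  - change_eq_C. field. now apply Hnz.
Qed.

Lemma holomorphic_on_Cexp (f f' : C -> C) :
  holomorphic_on D f f' -> holomorphic_on D (fun z => Cexp (f z)) (fun z => Cexp (f z) * f' z).
Proof.
  intros Hf phi phi' s Hs Hphi. derive_up_to_eq.
  - apply is_derive_RC_Cexp. eapply Hf; eassumption.
  - change_eq_C. ring.
Qed.

Lemma holomorphic_on_Csum (f f' : nat -> C -> C) (n : nat) :
  (forall k, (k <= n)%nat -> holomorphic_on D (f k) (f' k)) ->
  holomorphic_on D (fun z => Csum (fun k => f k z) n) (fun z => Csum (fun k => f' k z) n).
Proof.
  intros Hf phi phi' s Hs Hphi. derive_up_to_eq.
  - apply (is_derive_RC_Csum (fun k t => f k (phi t))). intros k Hk. eapply Hf; eassumption.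
  - change_eq_C. rewrite Cmult_comm, <- Csum_mult_l. apply Csum_ext. intros k _. ring.
Qed.

Lemma holomorphic_on_node_prod (ys : list C) :
  holomorphic_on D (node_prod ys) (node_prod_deriv ys).
Proof.
  induction ys as [|y ys IH].
  - apply holomorphic_on_const.
  - change (holomorphic_on D (fun z => (z - y) * node_prod ys z) (node_prod_deriv (y :: ys))).
    eapply holomorphic_on_ext.
    2: { apply holomorphic_on_mult; [| exact IH].
         apply holomorphic_on_plus; [apply holomorphic_on_id | apply holomorphic_on_const]. }
    intros z _. simpl. ring.
Qed.

End HolomorphicRules.

Ltac solve_continuous :=
  repeat match goal with
  | |- continuous (fun y => Cplus (@?a y) (@?b y)) _ => apply (continuous_Cplus a b)
  | |- continuous (fun y => Cminus (@?a y) (@?b y)) _ => apply (continuous_Cminus a b)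
  | |- continuous (fun y => Copp (@?a y)) _ => apply (continuous_Copp a)
  | |- continuous (fun y => Cmult (@?a y) (@?b y)) _ => apply (continuous_Cmult a b)
  | |- continuous (fun y => Cinv (@?a y)) _ => apply (continuous_Cinv a)
  | |- continuous (fun y => Cdiv (@?a y) (@?b y)) _ =>
      apply (continuous_Cmult a (fun y => Cinv (b y))); [| apply (continuous_Cinv b)]
  | |- continuous (fun y => Cexp (@?a y)) _ => apply (continuous_Cexp a)
  | |- continuous (fun y => RtoC (@?a y)) _ => apply (continuous_RtoC a)
  | |- continuous (fun y => circle (@?a y) (@?b y)) _ => apply (continuous_circle a b)
  | |- continuous (fun y => Cexpi (@?a y)) _ => apply (continuous_Cexpi a)
  | |- continuous (fun y => node_prod ?ys (@?a y)) _ => apply (continuous_node_prod ys a)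
  | |- continuous (fun y => node_prod_deriv ?ys (@?a y)) _ =>
      apply (continuous_node_prod_deriv ys a)
  | |- continuous (fun y => Ropp (@?a y)) _ => apply (@continuous_opp _ R_AbsRing R_NormedModule a)
  | |- continuous (fun p => fst p) (_, _) => apply (@continuous_fst R_UniformSpace R_UniformSpace)
  | |- continuous (fun p => snd p) (_, _) => apply (@continuous_snd R_UniformSpace R_UniformSpace)
  | |- continuous (fun y => y) _ => apply continuous_id
  | |- continuous (fun _ => _) _ => apply continuous_const
  | H : continuous ?g ?x |- continuous ?g ?x => exact H
  | H : forall t, continuous ?g t |- continuous ?g _ => apply H
  end.

Definition circle_integral (F : C -> C) (r : R) : C :=
  RInt_C (fun theta => F (circle r theta) * (Ci * circle r theta))%C 0 (2 * PI).

Lemma is_RInt_C_circle_integral (F : C -> C) (r : R) :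
  (forall theta, continuous (fun t => F (circle r t)) theta) ->
  is_RInt_C (fun theta => F (circle r theta) * (Ci * circle r theta))%C 0 (2 * PI)
    (circle_integral F r).
Proof.
  intros HF. apply is_RInt_C_continuous; [pose proof PI_RGT_0; lra |].
  intros t _. specialize (HF t). solve_continuous.
Qed.

Lemma circle_outside (m r theta : R) : 0 <= m -> m < r -> m < Cmod (circle r theta).
Proof. intros Hm Hr. rewrite Cmod_circle; lra. Qed.

Section RadiusIndependence.
Variables (F F' : C -> C) (m : R).
Hypothesis m_nonneg : 0 <= m.
Hypothesis F_holomorphic : holomorphic_on (fun z => m < Cmod z) F F'.
Hypothesis F_continuous : forall z, m < Cmod z -> continuous F z /\ continuous F' z.
Local Open Scope C_scope.

Let radial_derivative (r theta : R) : C :=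
  F' (circle r theta) * Cexpi theta * (Ci * circle r theta)
  + F (circle r theta) * (Ci * Cexpi theta).

Lemma continuous_F_on_circle {U : UniformSpace} (a b : U -> R) (x : U) :
  continuous a x -> continuous b x -> m < a x ->
  continuous (fun y => F (circle (a y) (b y))) x /\ continuous (fun y => F' (circle (a y) (b y))) x.
Proof.
  intros Ha Hb Hm. destruct (F_continuous (circle (a x) (b x))) as [HF HF'];
    [now apply circle_outside |].
  split; apply (continuous_comp (fun y => circle (a y) (b y))); auto; now apply continuous_circle.
Qed.

Lemma is_derive_RC_integrand_radius (r theta : R) : m < r ->
  is_derive_RC (fun u => F (circle u theta) * (Ci * circle u theta)) r (radial_derivative r theta).
Proof.
  intros Hr. derive_up_to_eq.
  - apply is_derive_RC_mult.
    + apply F_holomorphic; [now apply circle_outside | apply is_derive_RC_circle_radius].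
    + apply is_derive_RC_mult; [apply is_derive_RC_const | apply is_derive_RC_circle_radius].
  - change_eq_C. unfold radial_derivative.
    generalize (circle r theta) (Cexpi theta). intros g e. ring.
Qed.

Lemma is_derive_RC_radial_primitive (r theta : R) : m < r ->
  is_derive_RC (fun t => F (circle r t) * Cexpi t) theta (radial_derivative r theta).
Proof.
  intros Hr. derive_up_to_eq.
  - apply is_derive_RC_mult; [| apply is_derive_RC_Cexpi].
    apply F_holomorphic; [now apply circle_outside | apply is_derive_RC_circle_angle].
  - change_eq_C. unfold radial_derivative.
    generalize (circle r theta) (Cexpi theta). intros g e. ring.
Qed.

Lemma RInt_C_radial_derivative (r : R) : m < r ->
  RInt_C (radial_derivative r) 0 (2 * PI) = RtoC 0.
Proof.
  intros Hr. apply is_RInt_unique.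
  replace (RtoC 0) with (F (circle r (2 * PI)) * Cexpi (2 * PI) - F (circle r 0) * Cexpi 0)
    by (rewrite circle_2PI, Cexpi_2PI; ring).
  apply (is_RInt_C_derive (fun t => F (circle r t) * Cexpi t)); [pose proof PI_RGT_0; lra | |].
  - intros t _. now apply is_derive_RC_radial_primitive.
  - intros t _. unfold radial_derivative.
    destruct (continuous_F_on_circle (fun _ => r) (fun t => t) t) as [HF HF'];
      try exact Hr; solve_continuous.
Qed.

Lemma is_derive_circle_integral_radius (r : R) : m < r ->
  is_derive_RC (circle_integral F) r (0 : C).
Proof.
  intros Hr. rewrite <- (RInt_C_radial_derivative r Hr).
  assert (Hloc : locally r (fun u => m < u)).
  { assert (Hd : 0 < r - m) by lra. exists (mkposreal _ Hd). intros u Hu.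
    apply Rabs_lt_between' in Hu. simpl in Hu. lra. }
  apply is_derive_RC_RInt_param; [pose proof PI_RGT_0; lra | | |].
  - eapply filter_imp; [| exact Hloc]. intros u Hu t. now apply is_derive_RC_integrand_radius.
  - intros t _. unfold radial_derivative.
    destruct (continuous_F_on_circle (fun p : R * R => fst p) (fun p => snd p) (r, t))
      as [HF HF']; try exact Hr; solve_continuous.
  - eapply filter_imp; [| exact Hloc]. intros u Hu t _.
    destruct (continuous_F_on_circle (fun _ => u) (fun t => t) t) as [HF HF'];
      try exact Hu; solve_continuous.
Qed.

Lemma circle_integral_radius_indep (r1 r2 : R) : m < r1 -> m < r2 ->
  circle_integral F r1 = circle_integral F r2.
Proof.
  intros H1 H2.
  assert (Hmono : forall a b, m < a -> a < b -> circle_integral F a = circle_integral F b).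
  { intros a b Ha Hab. apply (eq_is_derive (V := C_R_NormedModule)); [| exact Hab].
    intros t Ht. apply is_derive_circle_integral_radius. lra. }
  destruct (Rtotal_order r1 r2) as [Hlt | [-> | Hgt]]; auto.
  symmetry. now apply Hmono.
Qed.

End RadiusIndependence.

Lemma circle_integral_derivative (W W' : C -> C) (m r : R) :
  holomorphic_on (fun z => m < Cmod z) W W' -> (forall z, m < Cmod z -> continuous W' z) ->
  0 <= m -> m < r -> circle_integral W' r = RtoC 0.
Proof.
  intros HW HW' Hm Hr. apply (is_RInt_unique (V := C_R_CompleteNormedModule)).
  replace (RtoC 0) with (W (circle r (2 * PI)) - W (circle r 0))%C by (rewrite circle_2PI; ring).
  apply (is_RInt_C_derive (fun t => W (circle r t))); [pose proof PI_RGT_0; lra | |].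
  - intros t _. apply HW; [now apply circle_outside | apply is_derive_RC_circle_angle].
  - intros t _.
    assert (continuous (fun theta => W' (circle r theta)) t).
    { apply (continuous_comp (circle r) W'); [apply (continuous_circle (fun _ => r) (fun s => s));
        [apply continuous_const | apply continuous_id] | now apply HW', circle_outside]. }
    solve_continuous.
Qed.

(** * Cauchy transforms *)

Notation is_derive_C := (@is_derive C_AbsRing C_NormedModule).

Lemma is_derive_C_of_quadratic_remainder (g : C -> C) (z0 l : C) (K delta : R) :
  0 < delta ->
  (forall z, Cmod (z - z0) < delta ->
     Cmod (g z - g z0 - (z - z0) * l) <= K * Cmod (z - z0) ^ 2)%C ->
  is_derive_C g z0 l.
Proof.
  intros Hdelta HK. split; [apply is_linear_scal_l |].
  intros x Hx.
  apply (is_filter_lim_locally_unique (K := C_AbsRing) (V := AbsRing_NormedModule C_AbsRing)) in Hx.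
  subst x. intros eps.
  set (K' := Rabs K + 1).
  assert (HK' : 0 < K') by (unfold K'; pose proof (Rabs_pos K); lra).
  assert (Hd : 0 < Rmin delta (eps / K'))
    by (apply Rmin_pos; [lra | apply Rdiv_lt_0_compat; [apply cond_pos | lra]]).
  exists (mkposreal _ Hd). intros z Hz.
  change (Cmod (z - z0) < Rmin delta (eps / K'))%C in Hz.
  change (Cmod (g z - g z0 - (z - z0) * l) <= eps * Cmod (z - z0))%C.
  assert (Hz1 : Cmod (z - z0)%C < delta) by (eapply Rlt_le_trans; [exact Hz | apply Rmin_l]).
  assert (Hz2 : K' * Cmod (z - z0)%C <= eps).
  { assert (Hz2 : Cmod (z - z0)%C < eps / K') by (eapply Rlt_le_trans; [exact Hz | apply Rmin_r]).
    apply Rmult_lt_compat_l with (r := K') in Hz2; [| exact HK'].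
    replace (K' * (eps / K')) with (pos eps) in Hz2 by (field; lra). lra. }
  eapply Rle_trans; [now apply HK |].
  set (n := Cmod (z - z0)%C) in *. pose proof (Cmod_ge_0 (z - z0)%C) as Hn. fold n in Hn.
  assert (K * n ^ 2 <= K' * n * n) by (unfold K'; pose proof (Rle_abs K); nra).
  nra.
Qed.

Lemma Cmod_bounded_on_segment (B : R -> C) (a b : R) :
  a <= b -> (forall t, continuous B t) -> exists M, forall t, a <= t <= b -> Cmod (B t) <= M.
Proof.
  intros Hab HB.
  destruct (continuity_ab_maj (fun t => Cmod (B t)) a b Hab) as [tmax [Hmax _]].
  - intros t _. apply continuity_pt_filterlim. now apply continuous_Cmod.
  - now exists (Cmod (B tmax)).
Qed.

Lemma Cmod_circle_minus_ge (r theta : R) (z : C) :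
  Cmod z < r -> r - Cmod z <= Cmod (circle r theta - z)%C.
Proof.
  intros Hz. rewrite <- (Cmod_circle r theta) at 1 by (pose proof (Cmod_ge_0 z); lra).
  assert (Cmod (circle r theta) <= Cmod (circle r theta - z)%C + Cmod z).
  { replace (circle r theta) with (circle r theta - z + z)%C at 1 by ring. apply Cmod_triangle. }
  lra.
Qed.

Section CauchyTransform.
Variables (B : R -> C) (r : R) (z0 : C).
Hypothesis B_continuous : forall theta, continuous B theta.
Hypothesis z0_inside : Cmod z0 < r.
Local Open Scope C_scope.

Let cauchy_transform (z : C) : C := RInt_C (fun theta => B theta / (circle r theta - z)) 0 (2 * PI).
Let d := (r - Cmod z0)%R.

Lemma circle_far_from_near_point (z : C) (theta : R) :
  Cmod (z - z0) < d / 2 -> d / 2 <= Cmod (circle r theta - z).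
Proof.
  intros Hz. unfold d in *.
  assert (Cmod z <= Cmod (z - z0) + Cmod z0)%R.
  { replace z with (z - z0 + z0) at 1 by ring. apply Cmod_triangle. }
  pose proof (Cmod_circle_minus_ge r theta z). lra.
Qed.

Lemma center_in_disc : Cmod (z0 - z0) < d / 2.
Proof. unfold Cminus. rewrite Cplus_opp_r, Cmod_0. unfold d. lra. Qed.

Lemma circle_far_from_center (theta : R) : d / 2 <= Cmod (circle r theta - z0).
Proof. exact (circle_far_from_near_point z0 theta center_in_disc). Qed.

Lemma is_RInt_C_cauchy_transform (z : C) : Cmod (z - z0) < d / 2 ->
  is_RInt_C (fun theta => B theta / (circle r theta - z)) 0 (2 * PI) (cauchy_transform z).
Proof.
  intros Hz. apply is_RInt_C_continuous; [pose proof PI_RGT_0; lra |].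
  intros t _. solve_continuous. apply Cmod_gt_0.
  pose proof (circle_far_from_near_point z t Hz). unfold d in *. lra.
Qed.

Lemma cauchy_remainder (z : C) (theta : R) : Cmod (z - z0) < d / 2 ->
  B theta / (circle r theta - z) - B theta / (circle r theta - z0)
    - (z - z0) * (B theta / ((circle r theta - z0) * (circle r theta - z0)))
  = B theta * ((z - z0) * (z - z0))
    / ((circle r theta - z) * (circle r theta - z0) * (circle r theta - z0)).
Proof.
  intros Hz. pose proof (circle_far_from_near_point z theta Hz) as H1.
  pose proof (circle_far_from_center theta) as H2.
  assert (Hd : (0 < d)%R) by (unfold d; lra).
  set (g := circle r theta) in *. clearbody g.
  field. split; apply Cmod_gt_0; lra.
Qed.

Lemma Cmod_cauchy_remainder_le (z : C) (theta M : R) :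
  Cmod (z - z0) < d / 2 -> Cmod (B theta) <= M ->
  Cmod (B theta * ((z - z0) * (z - z0))
        / ((circle r theta - z) * (circle r theta - z0) * (circle r theta - z0)))
  <= M * (8 / d ^ 3) * Cmod (z - z0) ^ 2.
Proof.
  intros Hz HM. pose proof (circle_far_from_near_point z theta Hz) as H1.
  pose proof (circle_far_from_center theta) as H2.
  assert (Hd : (0 < d)%R) by (unfold d; lra).
  set (g := circle r theta) in *. clearbody g.
  assert (HD0 : (0 < Cmod ((g - z) * (g - z0) * (g - z0)))%R)
    by (rewrite !Cmod_mult; apply Rmult_lt_0_compat; [apply Rmult_lt_0_compat |]; lra).
  assert (Hden : (/ Cmod ((g - z) * (g - z0) * (g - z0)) <= 8 / d ^ 3)%R).
  { rewrite !Cmod_mult.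
    replace (8 / d ^ 3)%R with (/ ((d / 2) * (d / 2) * (d / 2)))%R by (field; lra).
    apply Rinv_le_contravar; [apply Rmult_lt_0_compat; [apply Rmult_lt_0_compat |]; lra |].
    apply Rmult_le_compat; [nra | lra | | exact H2]. apply Rmult_le_compat; lra. }
  unfold Cdiv. rewrite Cmod_mult, Cmod_inv, Cmod_mult, (Cmod_mult (z - z0))
    by (apply Cmod_gt_0; exact HD0).
  pose proof (Cmod_ge_0 (B theta)). pose proof (Cmod_ge_0 (z - z0)).
  pose proof (Rinv_0_lt_compat _ HD0).
  set (n := Cmod (z - z0)) in *. set (i := (/ Cmod ((g - z) * (g - z0) * (g - z0)))%R) in *.
  apply Rle_trans with (M * (n * n) * (8 / d ^ 3))%R; [| right; ring].
  apply Rmult_le_compat; [nra | lra | apply Rmult_le_compat_r; nra | exact Hden].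
Qed.

Lemma is_derive_C_cauchy_transform :
  is_derive_C cauchy_transform z0
    (RInt_C (fun theta => B theta / ((circle r theta - z0) * (circle r theta - z0))) 0 (2 * PI)).
Proof.
  assert (Hd : (0 < d)%R) by (unfold d; lra).
  assert (H2PI : (0 <= 2 * PI)%R) by (pose proof PI_RGT_0; lra).
  destruct (Cmod_bounded_on_segment B 0 (2 * PI) H2PI B_continuous) as [M HM].
  apply (is_derive_C_of_quadratic_remainder _ _ _ (2 * PI * (M * (8 / d ^ 3)))%R (d / 2));
    [lra |].
  intros z Hz.
  assert (HI : is_RInt_C (fun theta => B theta / (circle r theta - z)
      - B theta / (circle r theta - z0)
      - (z - z0) * (B theta / ((circle r theta - z0) * (circle r theta - z0)))) 0 (2 * PI)
      (cauchy_transform z - cauchy_transform z0 - (z - z0) *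
       RInt_C (fun theta => B theta / ((circle r theta - z0) * (circle r theta - z0))) 0 (2 * PI))).
  { apply is_RInt_C_minus.
    { apply is_RInt_C_minus; apply is_RInt_C_cauchy_transform;
        [exact Hz | exact center_in_disc]. }
    apply is_RInt_C_mult_l, is_RInt_C_continuous; [exact H2PI |].
    intros t _. pose proof (circle_far_from_center t). solve_continuous.
    apply Cmult_neq_0; apply Cmod_gt_0; lra. }
  eapply Rle_trans.
  - apply (Cmod_is_RInt_C_le _ _ _ _ (M * (8 / d ^ 3) * Cmod (z - z0) ^ 2)%R H2PI HI).
    intros theta Htheta. rewrite cauchy_remainder by exact Hz.
    apply Cmod_cauchy_remainder_le; [exact Hz | now apply HM].
  - lra.
Qed.

End CauchyTransform.

Lemma is_derive_C_mult_l (c : C) (g : C -> C) (z l : C) :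
  is_derive_C g z l -> is_derive_C (fun w => c * g w)%C z (c * l)%C.
Proof.
  intros H. eapply filterdiff_ext_lin.
  - exact (filterdiff_scal_r_fct (K := C_AbsRing) (U := AbsRing_NormedModule C_AbsRing)
             (V := C_NormedModule) c g _ Cmult_comm H).
  - intros y. change (c * (y * l) = y * (c * l))%C. ring.
Qed.

(** * Exponential divided differences *)

Section Nodes.
Local Open Scope C_scope.

Lemma nodes_S (x : nat -> C) (q : nat) : nodes x (S q) = nodes x q ++ x (S q) :: nil.
Proof. unfold nodes. now rewrite (seq_S (S q) 0), map_app. Qed.

Lemma nodes_ext (x y : nat -> C) (q : nat) :
  (forall k, (k <= q)%nat -> x k = y k) -> nodes x q = nodes y q.
Proof.
  intros H. unfold nodes. apply map_ext_in. intros k Hk. apply in_seq in Hk. apply H. lia.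
Qed.

Lemma in_nodes (x : nat -> C) (q k : nat) : (k <= q)%nat -> In (x k) (nodes x q).
Proof. intros Hk. apply in_map, in_seq. lia. Qed.

Lemma in_nodes_upd (x : nat -> C) (q i : nat) (z y : C) :
  In y (nodes (upd x i z) q) -> y = z \/ In y (nodes x q).
Proof.
  unfold nodes. intros [k [<- Hk]]%in_map_iff. unfold upd.
  destruct (Nat.eqb k i); [now left | right; now apply in_map].
Qed.

Lemma maxmod_nodes_upd (x : nat -> C) (q i : nat) (z : C) :
  (maxmod (nodes (upd x i z) q) <= Rmax (maxmod (nodes x q)) (Cmod z))%R.
Proof.
  apply maxmod_le; [eapply Rle_trans; [apply maxmod_nonneg | apply Rmax_l] |].
  intros y Hy. destruct (in_nodes_upd x q i z y Hy) as [-> | Hin]; [apply Rmax_r |].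
  apply Rle_trans with (maxmod (nodes x q)); [now apply maxmod_ge | apply Rmax_l].
Qed.

Lemma maxmod_app_le (ys l : list C) :
  (forall y, In y l -> In y ys) -> (maxmod (ys ++ l) <= maxmod ys)%R.
Proof.
  intros Hl. apply maxmod_le; [apply maxmod_nonneg |].
  intros y [Hy | Hy]%in_app_or; apply maxmod_ge; auto.
Qed.

Lemma maxmod_nodes_app (x : nat -> C) (q : nat) (ks : list nat) :
  (forall k, In k ks -> (k <= q)%nat) -> (maxmod (nodes x q ++ map x ks) <= maxmod (nodes x q))%R.
Proof.
  intros Hks. apply maxmod_app_le. intros y [k [<- Hk]]%in_map_iff. now apply in_nodes, Hks.
Qed.

Lemma node_prod_upd (x : nat -> C) (q i : nat) (z w : C) : (i <= q)%nat ->
  node_prod (nodes (upd x i z) q) w * (w - x i) = node_prod (nodes x q) w * (w - z).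
Proof.
  revert i. induction q as [|q IH]; intros i Hi.
  - assert (i = 0%nat) by lia. subst. unfold nodes, upd; simpl. ring.
  - rewrite !nodes_S, !node_prod_app, !node_prod_cons, !node_prod_nil.
    destruct (Nat.eq_dec i (S q)) as [-> | Hne].
    + rewrite (nodes_ext (upd x (S q) z) x q).
      * unfold upd at 1. rewrite Nat.eqb_refl. ring.
      * intros k Hk. unfold upd. destruct (Nat.eqb_spec k (S q)); [lia | reflexivity].
    + replace (upd x i z (S q)) with (x (S q))
        by (unfold upd; destruct (Nat.eqb_spec (S q) i); [lia | reflexivity]).
      transitivity (node_prod (nodes (upd x i z) q) w * (w - x i) * ((w - x (S q)) * 1)); [ring |].
      rewrite IH by lia. ring.
Qed.

Lemma fold_inv_nodes (x : nat -> C) (q : nat) (z : C) :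
  fold_right (fun y acc => / (z - y) + acc) 0 (nodes x q) = Csum (fun k => / (z - x k)) q.
Proof.
  unfold nodes, Csum. induction (seq 0 (S q)) as [|k l IH]; simpl; [reflexivity |].
  now rewrite IH.
Qed.

End Nodes.

Lemma divdiff_circle_integral (f : C -> C) (ys : list C) :
  divdiff f ys
  = (/ (RtoC (2 * PI) * Ci) * circle_integral (fun z => f z / node_prod ys z) (node_radius ys))%C.
Proof. reflexivity. Qed.

Lemma holomorphic_on_Cexp_scal (D : C -> Prop) (c : C) :
  holomorphic_on D (fun z => Cexp (c * z)) (fun z => Cexp (c * z) * c)%C.
Proof.
  apply holomorphic_on_Cexp. eapply holomorphic_on_ext.
  2: { apply holomorphic_on_mult; [apply holomorphic_on_const | apply holomorphic_on_id]. }
  intros z _. simpl. ring.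
Qed.

Lemma exp_dd_circle_integral (t : R) (ys : list C) (r : R) : maxmod ys < r ->
  exp_dd t ys
  = (/ (RtoC (2 * PI) * Ci) * circle_integral (fun z => Cexp (t * z) / node_prod ys z) r)%C.
Proof.
  intros Hr. unfold exp_dd. rewrite divdiff_circle_integral. f_equal.
  pose proof (maxmod_nonneg ys).
  apply (circle_integral_radius_indep _
    (fun z => Cexp (t * z) * t * / node_prod ys z
              + Cexp (t * z) * (- node_prod_deriv ys z / (node_prod ys z * node_prod ys z)))%C
    (maxmod ys)); auto using node_radius_gt.
  - apply holomorphic_on_mult; [apply holomorphic_on_Cexp_scal |].
    apply holomorphic_on_inv; [apply node_prod_neq_0 | apply holomorphic_on_node_prod].
  - intros z Hz. pose proof (node_prod_neq_0 ys z Hz) as HPz.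
    split; solve_continuous; try apply Cmult_neq_0; exact HPz.
Qed.

Lemma is_derive_exp_dd_time (ys : list C) (r tau : R) : maxmod ys < r ->
  is_derive_RC (fun t => exp_dd (- t) ys) tau
    (/ (RtoC (2 * PI) * Ci) *
     circle_integral (fun z => Cexp (RtoC (- tau) * z) * - z / node_prod ys z) r)%C.
Proof.
  intros Hr. pose proof (maxmod_nonneg ys).
  assert (HP : forall theta, node_prod ys (circle r theta) <> 0%C)
    by (intros; apply node_prod_neq_0, circle_outside; lra).
  apply (is_derive_ext (V := C_R_NormedModule) (fun t : R => / (RtoC (2 * PI) * Ci) *
           circle_integral (fun z => Cexp (RtoC (- t) * z) / node_prod ys z) r)%C);
    [intros t; symmetry; apply exp_dd_circle_integral, Hr |].
  derive_up_to_eq.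
  - apply is_derive_RC_mult; [apply is_derive_RC_const |].
    apply (is_derive_RC_RInt_param _
             (fun t theta => Cexp (RtoC (- t) * circle r theta) * - circle r theta
                             / node_prod ys (circle r theta) * (Ci * circle r theta))%C);
      [pose proof PI_RGT_0; lra | | |].
    + apply filter_forall. intros t theta. unfold Cdiv. derive_up_to_eq.
      * apply is_derive_RC_mult; [| apply is_derive_RC_const].
        apply is_derive_RC_mult; [| apply is_derive_RC_const].
        apply is_derive_RC_Cexp, is_derive_RC_mult; [| apply is_derive_RC_const].
        apply is_derive_RC_RtoC. exact (is_derive_opp (fun u => u) t _ (is_derive_id t)).
      * change_eq_C. generalize (circle r theta). intros g. unfold opp, one. simpl.
        rewrite !RtoC_opp. ring.
    + intros theta _. specialize (HP theta). solve_continuous. exact HP.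
    + apply filter_forall. intros t theta _. specialize (HP theta). solve_continuous. exact HP.
  - change_eq_C. unfold circle_integral. ring.
Qed.

Lemma circle_minus_neq_0 (r theta : R) (z : C) : Cmod z < r -> (circle r theta - z <> 0)%C.
Proof. intros Hz. apply Cmod_gt_0. pose proof (Cmod_circle_minus_ge r theta z Hz). lra. Qed.

Section NodeDerivative.
Variables (x : nat -> C) (q i : nat) (r tau : R).
Hypothesis i_le_q : (i <= q)%nat.
Hypothesis nodes_inside : maxmod (nodes x q) < r.
Local Open Scope C_scope.

(* Moving the node [x i] to [z] multiplies the integrand by [(w - x i) / (w - z)], so near
   [x i] the divided difference is a Cauchy transform of the following density. *)
Let B (theta : R) : C :=
  Cexp (RtoC (- tau) * circle r theta) * (circle r theta - x i)
  / node_prod (nodes x q) (circle r theta) * (Ci * circle r theta).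

Lemma Cmod_node_lt_radius : Cmod (x i) < r.
Proof. pose proof (maxmod_ge _ _ (in_nodes x q i i_le_q)). lra. Qed.

Lemma node_prod_circle_neq_0 (theta : R) : node_prod (nodes x q) (circle r theta) <> 0.
Proof. apply node_prod_neq_0, circle_outside; [apply maxmod_nonneg | exact nodes_inside]. Qed.

Lemma exp_dd_upd_cauchy_transform (z : C) : (Cmod z < r)%R ->
  exp_dd (- tau) (nodes (upd x i z) q)
  = / (RtoC (2 * PI) * Ci) * RInt_C (fun theta => B theta / (circle r theta - z)) 0 (2 * PI).
Proof.
  intros Hz.
  assert (Hupd : (maxmod (nodes (upd x i z) q) < r)%R)
    by (eapply Rle_lt_trans; [apply maxmod_nodes_upd | now apply Rmax_lub_lt]).
  rewrite (exp_dd_circle_integral _ _ r Hupd). f_equal.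
  apply (RInt_ext (V := C_R_CompleteNormedModule)). intros theta _. change_eq_C. unfold B.
  assert (HPu := node_prod_neq_0 _ _ (circle_outside _ r theta (maxmod_nonneg _) Hupd)).
  assert (Hrel := node_prod_upd x q i z (circle r theta) i_le_q).
  pose proof (node_prod_circle_neq_0 theta) as HP.
  pose proof (circle_minus_neq_0 r theta z Hz) as Hz0.
  pose proof (circle_minus_neq_0 r theta (x i) Cmod_node_lt_radius) as Hxi0.
  set (g := circle r theta) in *. clearbody g.
  set (Pu := node_prod (nodes (upd x i z) q) g) in *. clearbody Pu.
  set (PX := node_prod (nodes x q) g) in *. clearbody PX.
  generalize (Cexp (RtoC (- tau) * g)). intros e.
  replace Pu with (PX * (g - z) / (g - x i)) by (rewrite <- Hrel; field; exact Hxi0).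
  field. repeat split; assumption.
Qed.

Lemma is_derive_exp_dd_node :
  is_derive_C (fun z => exp_dd (- tau) (nodes (upd x i z) q)) (x i)
    (/ (RtoC (2 * PI) * Ci) * circle_integral
       (fun z => Cexp (RtoC (- tau) * z) / node_prod (nodes x q ++ x i :: nil) z) r).
Proof.
  pose proof Cmod_node_lt_radius as Hxi.
  apply (is_derive_ext_loc (fun z => / (RtoC (2 * PI) * Ci) *
           RInt_C (fun theta => B theta / (circle r theta - z)) 0 (2 * PI))).
  - assert (Heps : (0 < r - Cmod (x i))%R) by lra. exists (mkposreal _ Heps). intros z Hz.
    change (Cmod (z - x i) < r - Cmod (x i))%R in Hz.
    symmetry. apply exp_dd_upd_cauchy_transform.
    assert (Cmod z <= Cmod (z - x i) + Cmod (x i))%R.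
    { replace z with (z - x i + x i) at 1 by ring. apply Cmod_triangle. }
    lra.
  - derive_up_to_eq.
    + apply is_derive_C_mult_l, is_derive_C_cauchy_transform; [| exact Hxi].
      intros theta. unfold B. pose proof (node_prod_circle_neq_0 theta). solve_continuous.
      assumption.
    + change_eq_C. f_equal. unfold circle_integral. apply RInt_ext. intros theta _.
      change_eq_C. unfold B. rewrite node_prod_app, !node_prod_cons, node_prod_nil.
      pose proof (node_prod_circle_neq_0 theta) as HP.
      pose proof (circle_minus_neq_0 r theta (x i) Hxi) as Hxi0.
      set (g := circle r theta) in *. clearbody g.
      set (PX := node_prod (nodes x q) g) in *. clearbody PX.
      generalize (Cexp (RtoC (- tau) * g)). intros e.
      field. split; assumption.
Qed.

End NodeDerivative.

Section ExactIntegrand.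
Variables (x : nat -> C) (q : nat) (tau : R).
Local Open Scope C_scope.

Let outside (z : C) : Prop := (maxmod (nodes x q) < Cmod z)%R.
Let E (z : C) : C := Cexp (RtoC (- tau) * z).
Let P (z : C) : C := node_prod (nodes x q) z.
Let S1 (z : C) : C := Csum (fun k => / (z - x k)) q.
Let S2 (z : C) : C := Csum (fun k => / (z - x k) * / (z - x k)) q.

(* On the circle, the difference of the two sides integrates [W'] ([exact_integrand]), and
   [W] is a primitive of [W'] ([holomorphic_on_W]). *)
Let W (z : C) : C := E z * (1 - z * S1 z + tau * z) * / P z * / 2.
Let W' (z : C) : C :=
  E z * / P z * (z * (S1 z * S1 z + S2 z) / 2 - S1 z - tau * tau * z / 2).

Lemma outside_not_node (z : C) (k : nat) : (k <= q)%nat -> outside z -> z - x k <> 0.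
Proof. intros Hk Hz. exact (Cminus_neq_0_outside _ _ _ (in_nodes x q k Hk) Hz). Qed.

Lemma holomorphic_on_W : holomorphic_on outside W W'.
Proof.
  eapply holomorphic_on_ext.
  2: { apply holomorphic_on_mult; [| apply holomorphic_on_const].
       apply holomorphic_on_mult; [apply holomorphic_on_mult |].
       - apply holomorphic_on_Cexp_scal.
       - apply holomorphic_on_plus; [apply holomorphic_on_plus |].
         + apply holomorphic_on_const.
         + apply holomorphic_on_opp, holomorphic_on_mult; [apply holomorphic_on_id |].
           apply holomorphic_on_Csum. intros k Hk.
           apply holomorphic_on_inv; [intros z Hz; now apply outside_not_node |].
           apply holomorphic_on_plus; [apply holomorphic_on_id | apply holomorphic_on_const].
         + apply holomorphic_on_mult; [apply holomorphic_on_const | apply holomorphic_on_id].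
       - apply holomorphic_on_inv; [intros z Hz; now apply node_prod_neq_0 |].
         apply holomorphic_on_node_prod. }
  intros z Hz. cbv beta.
  assert (HP : P z <> 0) by now apply node_prod_neq_0.
  assert (HS1' : Csum (fun k => - (1 + 0) / ((z - x k) * (z - x k))) q = - S2 z).
  { transitivity (Csum (fun k => (-1) * (/ (z - x k) * / (z - x k))) q).
    - apply Csum_ext. intros k Hk. field. now apply outside_not_node.
    - rewrite Csum_mult_l. unfold S2. ring. }
  assert (HP' : node_prod_deriv (nodes x q) z = P z * S1 z).
  { unfold P, S1. rewrite node_prod_deriv_eq, fold_inv_nodes; [reflexivity |].
    intros y Hy. exact (Cminus_neq_0_outside _ _ _ Hy Hz). }
  rewrite HS1', HP'. unfold W', E. rewrite RtoC_opp. field. exact HP.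
Qed.

Lemma continuous_W' (z : C) : outside z -> continuous W' z.
Proof.
  intros Hz. unfold W', E, P, S1, S2.
  assert (HS : forall k, (k <= q)%nat -> continuous (fun y => / (y - x k)) z).
  { intros k Hk. solve_continuous. now apply outside_not_node. }
  assert (continuous (fun y => Csum (fun k => / (y - x k)) q) z)
    by (apply (continuous_Csum (fun k y => / (y - x k))); exact HS).
  assert (continuous (fun y => Csum (fun k => / (y - x k) * / (y - x k)) q) z).
  { apply (continuous_Csum (fun k y => / (y - x k) * / (y - x k))). intros k Hk.
    apply continuous_Cmult; now apply HS. }
  solve_continuous; [now apply node_prod_neq_0 | ..]; intros H2; injection H2; lra.
Qed.

Lemma exact_integrand (z : C) : outside z ->
  Csum (fun i => Csum (fun j =>
      if Nat.leb i j then x i * (E z / node_prod (nodes x q ++ x i :: x j :: nil) z) else 0) q) q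
  - (RtoC (- (tau ^ 2) / 2) * (E z * - z / P z)
     - Csum (fun i => INR i * (E z / node_prod (nodes x q ++ x i :: nil) z)) q)
  = W' z.
Proof.
  intros Hz.
  assert (HP : P z <> 0) by now apply node_prod_neq_0.
  assert (Hu : forall k, (k <= q)%nat -> x k * / (z - x k) = z * / (z - x k) - 1)
    by (intros k Hk; field; now apply outside_not_node).
  pose proof (Csum_upper_triangle_resolvent x (fun k => / (z - x k)) z q Hu) as Hres.
  rewrite (Csum_ext _ (fun i => E z * / P z * Csum (fun j =>
      if Nat.leb i j then x i * / (z - x i) * / (z - x j) else 0) q)).
  2: { intros i Hi. rewrite <- Csum_mult_l. apply Csum_ext. intros j Hj.
       destruct (Nat.leb i j); [| ring].
       rewrite node_prod_app, !node_prod_cons, node_prod_nil. fold (P z).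
       field. repeat split; [now apply outside_not_node .. | exact HP]. }
  rewrite (Csum_ext (fun i => INR i * (E z / node_prod (nodes x q ++ x i :: nil) z))
                    (fun i => E z * / P z * (INR i * / (z - x i)))).
  2: { intros i Hi. rewrite node_prod_app, !node_prod_cons, node_prod_nil. fold (P z).
       field. split; [now apply outside_not_node | exact HP]. }
  rewrite !Csum_mult_l.
  replace (RtoC (- (tau ^ 2) / 2)) with (- (RtoC tau * RtoC tau) / 2)
    by (rewrite RtoC_div, RtoC_opp, RtoC_pow by lra; simpl; field).
  unfold W', S1, S2.
  set (L := Csum (fun i => Csum (fun j =>
                if Nat.leb i j then x i * / (z - x i) * / (z - x j) else 0) q) q) in *.
  set (N := Csum (fun i => INR i * / (z - x i)) q) in *.
  replace L with ((z * (Csum (fun k => / (z - x k)) q * Csum (fun k => / (z - x k)) q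
                        + Csum (fun k => / (z - x k) * / (z - x k)) q)
                   - 2 * Csum (fun k => / (z - x k)) q) / 2 - N) by (rewrite <- Hres; field).
  field. exact HP.
Qed.

Variable r : R.
Hypothesis nodes_inside : (maxmod (nodes x q) < r)%R.

Lemma outside_circle (theta : R) : outside (circle r theta).
Proof. apply circle_outside; [apply maxmod_nonneg | exact nodes_inside]. Qed.

Lemma is_RInt_C_node_quotient (ks : list nat) : (forall k, In k ks -> (k <= q)%nat) ->
  is_RInt_C (fun theta => E (circle r theta) / node_prod (nodes x q ++ map x ks) (circle r theta)
                          * (Ci * circle r theta))
    0 (2 * PI) (circle_integral (fun z => E z / node_prod (nodes x q ++ map x ks) z) r).
Proof.
  intros Hks. apply is_RInt_C_circle_integral. intros t. unfold E. solve_continuous.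
  apply node_prod_neq_0, circle_outside; [apply maxmod_nonneg |].
  eapply Rle_lt_trans; [apply maxmod_nodes_app, Hks | exact nodes_inside].
Qed.

Lemma is_RInt_C_time_quotient :
  is_RInt_C (fun theta => E (circle r theta) * - circle r theta / P (circle r theta)
                          * (Ci * circle r theta))
    0 (2 * PI) (circle_integral (fun z => E z * - z / P z) r).
Proof.
  apply is_RInt_C_circle_integral. intros t. unfold E, P. solve_continuous.
  apply node_prod_neq_0, outside_circle.
Qed.

Lemma circle_integral_identity :
  Csum (fun i => Csum (fun j => if Nat.leb i j then
      x i * circle_integral (fun z => Cexp (RtoC (- tau) * z)
                                      / node_prod (nodes x q ++ x i :: x j :: nil) z) r
      else 0) q) q
  = RtoC (- (tau ^ 2) / 2) *
      circle_integral (fun z => Cexp (RtoC (- tau) * z) * - z / node_prod (nodes x q) z) r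
    - Csum (fun i => INR i * circle_integral
        (fun z => Cexp (RtoC (- tau) * z) / node_prod (nodes x q ++ x i :: nil) z) r) q.
Proof.
  rewrite (Csum_ext _ (fun i => Csum (fun j => (if Nat.leb i j then x i else 0) *
      circle_integral (fun z => E z / node_prod (nodes x q ++ x i :: x j :: nil) z) r) q))
    by (intros i _; apply Csum_ext; intros j _; now destruct (Nat.leb i j); [| ring]).
  match goal with |- ?lhs = ?rhs =>
    enough (Hdiff : lhs - rhs = 0) by (transitivity (lhs - rhs + rhs); [ring | rewrite Hdiff; ring])
  end.
  transitivity (circle_integral W' r).
  2: { apply (circle_integral_derivative W W' _ r holomorphic_on_W continuous_W');
         [apply maxmod_nonneg | exact nodes_inside]. }
  symmetry. apply (is_RInt_unique (V := C_R_CompleteNormedModule)).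
  eapply is_RInt_ext; cycle 1.
  - apply is_RInt_C_minus; [| apply is_RInt_C_minus].
    + apply is_RInt_C_Csum. intros i Hi. apply is_RInt_C_Csum. intros j Hj.
      apply is_RInt_C_mult_l, (is_RInt_C_node_quotient (i :: j :: nil)).
      intros k [<- | [<- | []]]; assumption.
    + apply is_RInt_C_mult_l, is_RInt_C_time_quotient.
    + apply is_RInt_C_Csum. intros i Hi.
      apply is_RInt_C_mult_l, (is_RInt_C_node_quotient (i :: nil)).
      intros k [<- | []]. exact Hi.
  - intros theta _. cbn [map].
    rewrite <- (exact_integrand (circle r theta) (outside_circle theta)).
    rewrite Csum_upper_triangle_mult_r, Csum_mult_assoc_r.
    change_eq_C. generalize (circle r theta). intros g. ring.
Qed.

End ExactIntegrand.

Lemma exp_dd_identity (x : nat -> C) (q : nat) (tau r : R) : maxmod (nodes x q) < r ->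
  (Csum (fun i => Csum (fun j =>
      if Nat.leb i j then x i * exp_dd (- tau) (nodes x q ++ x i :: x j :: nil) else 0) q) q
  = RtoC (- (tau ^ 2) / 2) *
      (/ (RtoC (2 * PI) * Ci) *
       circle_integral (fun z => Cexp (RtoC (- tau) * z) * - z / node_prod (nodes x q) z) r)
    - Csum (fun i => INR i * (/ (RtoC (2 * PI) * Ci) *
        circle_integral (fun z => Cexp (RtoC (- tau) * z)
                                  / node_prod (nodes x q ++ x i :: nil) z) r)) q)%C.
Proof.
  intros Hr.
  rewrite (Csum_ext _ (fun i => / (RtoC (2 * PI) * Ci) * Csum (fun j => if Nat.leb i j then x i *
      circle_integral (fun z => Cexp (RtoC (- tau) * z)
                                / node_prod (nodes x q ++ x i :: x j :: nil) z) r else 0) q)%C).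
  - rewrite Csum_mult_l, (circle_integral_identity x q tau r Hr), Csum_mult_assoc_l.
    change_eq_C. ring.
  - intros i Hi. rewrite <- Csum_mult_l. apply Csum_ext. intros j Hj.
    destruct (Nat.leb_spec i j); [| ring].
    rewrite (exp_dd_circle_integral _ _ r); [ring |].
    eapply Rle_lt_trans; [| exact Hr].
    apply (maxmod_nodes_app x q (i :: j :: nil)). intros k [<- | [<- | []]]; lia.
Qed.

Theorem lemma4 (q : nat) (x : nat -> C) (tau : R) :
  exists (dtau : C) (dx : nat -> C),
    @is_derive R_AbsRing C_R_NormedModule
      (fun t : R => exp_dd (- t) (nodes x q)) tau dtau /\
    (forall i : nat, (i <= q)%nat ->
      @is_derive C_AbsRing C_NormedModule
        (fun z : C => exp_dd (- tau) (nodes (upd x i z) q)) (x i) (dx i)) /\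
    Csum (fun i => Csum (fun j =>
        if Nat.leb i j
        then Cmult (x i) (exp_dd (- tau) (nodes x q ++ x i :: x j :: nil))
        else RtoC 0) q) q
    = Cminus (Cmult (RtoC (- (tau ^ 2) / 2)) dtau)
             (Csum (fun i => Cmult (RtoC (INR i)) (dx i)) q).
Proof.
  pose proof (node_radius_gt (nodes x q)) as Hr.
  eexists; eexists; split; [| split].
  - exact (is_derive_exp_dd_time _ _ tau Hr).
  - intros i Hi. exact (is_derive_exp_dd_node x q i _ tau Hi Hr).
  - exact (exp_dd_identity x q tau _ Hr).
Qed.
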